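(* Let $X$ be a finitely supported subset of an invariant set $U$. (8) $\wp_{fs}(X)$ is FSM Dedekind infinite if and only if $X$ is FSM ascending infinite. (9) If $X$ is FSM Dedekind infinite, then $X$ is FSM ascending infinite; the converse fails, since $\wp_{fin}(A)$ is FSM ascending infinite but not FSM Dedekind infinite.
   Context: Framework (FSM). Work in ZF with a fixed infinite set $A$ of atoms; $S_A$ is the group of bijections of $A$ fixing all but finitely many atoms; $Fix(S)$ is the set of $\pi\in S_A$ fixing each element of $S\subseteq A$; $S$ supports $x$ if $\pi\cdot x=x$ for all $\pi\in Fix(S)$. An invariant set is an $S_A$-set all of whose elements have finite supports; subsets carry $\pi\star Z=\{\pi\cdot z:z\in Z\}$; $\wp_{fs}(X)$ is the set of subsets of $U$ contained in $X$ that are finitely supported under $\star$, and $\wp_{fin}(A)$ is the set of finite subsets of $A$. $\mathbb N$ carries the trivial action. A function is finitely supported if there is a finite $S$ such that for all $\pi\in Fix(S)$, $f(\pi\cdot x)=\pi\cdot f(x)$ and $\pi$ preserves domain and codomain. $X$ is FSM Dedekind infinite if there is a finitely supported injection from $X$ onto a finitely supported proper subset of $X$. $X$ is FSM ascending infinite if there is a sequence $(X_n)_{n\in\mathbb N}$ of finitely supported subsets of $U$ with $X_0\subseteq X_1\subseteq\cdots$, such that the map $n\mapsto X_n$ is finitely supported, $X\subseteq\bigcup_nX_n$, and there is no $n$ with $X\subseteq X_n$. *)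

From Stdlib Require Import List FunctionalExtensionality PropExtensionality.
Import ListNotations.
Set Implicit Arguments.

Definition infinite_atoms (Atom : Type) : Prop :=
  forall l : list Atom, exists a, ~ In a l.

Record perm (Atom : Type) := Perm {
  pf : Atom -> Atom;
  pinv : Atom -> Atom;
  pfK : forall a, pinv (pf a) = a;
  pinvK : forall a, pf (pinv a) = a;
  psupp : list Atom;
  psuppP : forall a, ~ In a psupp -> pf a = a }.

Definition pid (Atom : Type) : perm Atom :=
  @Perm Atom (fun a => a) (fun a => a) (fun a => eq_refl) (fun a => eq_refl)
        [] (fun a _ => eq_refl).

Definition pcomp (Atom : Type) (p q : perm Atom) : perm Atom.
Proof.
  refine (@Perm Atom (fun a => pf p (pf q a)) (fun a => pinv q (pinv p a))
            _ _ (psupp p ++ psupp q) _).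
  - intro a; rewrite pfK, pfK; reflexivity.
  - intro a; rewrite pinvK, pinvK; reflexivity.
  - intros a Ha. rewrite (psuppP q a), (psuppP p a); auto;
      intro H; apply Ha; apply in_or_app; auto.
Defined.

Record pset (Atom : Type) := PSet {
  carrier :> Type;
  act : perm Atom -> carrier -> carrier;
  act_id : forall x, act (pid Atom) x = x;
  act_comp : forall p q x, act (pcomp p q) x = act p (act q x) }.

Arguments act {Atom} _ _ _.

Section FSM.
Variable Atom : Type.

Definition Fix (S : list Atom) (p : perm Atom) : Prop :=
  forall a, In a S -> pf p a = a.

Definition supports (T : pset Atom) (S : list Atom) (x : T) : Prop :=
  forall p, Fix S p -> act T p x = x.
Arguments supports {T} S x.

Definition fsupp (T : pset Atom) (x : T) : Prop := exists S, @supports T S x.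
Arguments fsupp {T} x.

Definition setact (T : pset Atom) (p : perm Atom) (Z : T -> Prop) : T -> Prop :=
  fun y => exists z, Z z /\ y = act T p z.
Arguments setact {T} p Z.

Definition subset (T : Type) (Y Z : T -> Prop) : Prop := forall x, Y x -> Z x.
Definition seteq (T : Type) (Y Z : T -> Prop) : Prop := forall x, Y x <-> Z x.

Definition fs_subset (T : pset Atom) (Z : T -> Prop) : Prop :=
  exists S : list Atom, forall p, Fix S p -> seteq (setact p Z) Z.
Arguments fs_subset {T} Z.

(* An invariant set U, presented as a subset of an S_A-set T that is closed
   under the action and all of whose elements are finitely supported. *)
Definition invariant_set (T : pset Atom) (U : T -> Prop) : Prop :=
  (forall p x, U x -> U (act T p x)) /\ (forall x, U x -> fsupp x).
Arguments invariant_set {T} U.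

Lemma setact_id (T : pset Atom) (Z : T -> Prop) : setact (pid Atom) Z = Z.
Proof.
  apply functional_extensionality; intro y; apply propositional_extensionality.
  unfold setact; split.
  - intros [z [Hz ->]]; rewrite act_id; exact Hz.
  - intro Hy; exists y; rewrite act_id; auto.
Qed.

Lemma setact_comp (T : pset Atom) p q (Z : T -> Prop) :
  setact (pcomp p q) Z = setact p (setact q Z).
Proof.
  apply functional_extensionality; intro y; apply propositional_extensionality.
  unfold setact; split.
  - intros [z [Hz ->]]; exists (act T q z); split.
    + exists z; auto.
    + apply act_comp.
  - intros [w [[z [Hz ->]] ->]]; exists z; split; auto; symmetry; apply act_comp.
Qed.

Definition powset (T : pset Atom) : pset Atom :=
  @PSet Atom (T -> Prop) (@setact T) (@setact_id T) (@setact_comp T).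

Definition pfs (T : pset Atom) (X : T -> Prop) : powset T -> Prop :=
  fun Z => fs_subset Z /\ subset Z X.
Arguments pfs {T} X.

Definition atoms_pset : pset Atom :=
  @PSet Atom Atom (fun p a => pf p a) (fun a => eq_refl) (fun p q a => eq_refl).

Definition pfin : powset atoms_pset -> Prop :=
  fun Z => exists l : list Atom, forall a, Z a <-> In a l.

(* finitely supported function from X to Y (f is given as a function on the
   ambient S_A-sets; only its values on X matter) *)
Definition fs_fun (T T' : pset Atom) (X : T -> Prop) (Y : T' -> Prop)
  (f : T -> T') : Prop :=
  exists S : list Atom, forall p, Fix S p ->
    seteq (setact p X) X /\ seteq (setact p Y) Y /\
    (forall x, X x -> f (act T p x) = act T' p (f x)).
Arguments fs_fun {T T'} X Y f.

Definition fsm_dedekind_infinite (T : pset Atom) (X : T -> Prop) : Prop :=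
  exists (Y : T -> Prop) (f : T -> T),
    fs_subset Y /\ subset Y X /\ (exists x, X x /\ ~ Y x) /\
    (forall x, X x -> Y (f x)) /\
    (forall x1 x2, X x1 -> X x2 -> f x1 = f x2 -> x1 = x2) /\
    (forall y, Y y -> exists x, X x /\ f x = y) /\
    fs_fun X Y f.
Arguments fsm_dedekind_infinite {T} X.

(* FSM ascending infinite (relative to the invariant set U; N carries the
   trivial action, so n |-> X_n is finitely supported iff some S supports
   every X_n) *)
Definition fsm_ascending_infinite (T : pset Atom) (U X : T -> Prop) : Prop :=
  exists Xs : nat -> (T -> Prop),
    (forall n, subset (Xs n) U) /\
    (forall n, fs_subset (Xs n)) /\
    (forall n, subset (Xs n) (Xs (S n))) /\
    (exists S : list Atom, forall p, Fix S p ->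
        forall n, seteq (setact p (Xs n)) (Xs n)) /\
    subset X (fun x => exists n, Xs n x) /\
    ~ (exists n, subset X (Xs n)).
Arguments fsm_ascending_infinite {T} U X.

End FSM.

Arguments supports {Atom T} S x.
Arguments fsupp {Atom T} x.
Arguments setact {Atom T} p Z.
Arguments fs_subset {Atom T} Z.
Arguments invariant_set {Atom T} U.
Arguments pfs {Atom T} X.
Arguments fs_fun {Atom T T'} X Y f.
Arguments fsm_dedekind_infinite {Atom T} X.
Arguments fsm_ascending_infinite {Atom T} U X.
Arguments Fix {Atom} S p.

Arguments subset {T} Y Z.
Arguments seteq {T} Y Z.

(* Both implications towards ascending infiniteness rest on one construction
   (ascending_of_sequence): a sequence x_k in X whose terms lie in pairwise
   distinct classes of a classification invariant under Fix(S) yields the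
   ascending cover X_n = { x in X | x is in no class of an x_k with k > n }.
   - (9), first part: the orbit of a point outside the range of a Dedekind
     injection on X is such a sequence, classified by equality.
   - (8), forward: the orbit of a Dedekind injection on wp_fs(X) is an
     injective, uniformly supported family Z_k of subsets of X; classifying
     x by its trace { k | x in Z_k }, a pigeonhole count shows that X meets
     infinitely many classes, whence a sequence of pairwise distinct traces.
   - (8), backward: the sets X ∩ X_n form an unbounded chain in wp_fs(X);
     mapping each chain member to the next strictly larger one and fixing
     every other set is an FSM injection missing the first member.
   - (9), converse: wp_fin(A) is covered by the invariant families of sets of
     size at most n; but a finitely supported f on wp_fin(A) satisfies
     f(Z) ⊆ S ∪ Z, so it permutes the finitely many subsets of S ∪ Z_0. *)

From Stdlib Require Import List Arith Lia Classical ClassicalEpsilon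
  FunctionalExtensionality PropExtensionality.
Import ListNotations.
Set Implicit Arguments.

Lemma seteq_eq (T : Type) (A B : T -> Prop) : seteq A B -> A = B.
Proof.
  intro H. apply functional_extensionality; intro x.
  apply propositional_extensionality, H.
Qed.

Lemma subset_antisym (T : Type) (A B : T -> Prop) :
  subset A B -> subset B A -> A = B.
Proof. intros H1 H2. apply seteq_eq. intro x; split; auto. Qed.

Section Permutations.
Variable Atom : Type.

Definition perm_inv (p : perm Atom) : perm Atom.
Proof.
  refine (@Perm Atom (pinv p) (pf p) (pinvK p) (pfK p) (psupp p) _).
  intros a Ha. pose proof (pfK p a) as H. rewrite (psuppP p a Ha) in H. exact H.
Defined.

Lemma Fix_inv (S : list Atom) (p : perm Atom) : Fix S p -> Fix S (perm_inv p).
Proof.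
  intros H a Ha. simpl. pose proof (pfK p a) as E. rewrite (H a Ha) in E. exact E.
Qed.

Lemma Fix_app_l (S1 S2 : list Atom) p : Fix (S1 ++ S2) p -> Fix S1 p.
Proof. intros H a Ha; apply H, in_or_app; auto. Qed.

Lemma Fix_app_r (S1 S2 : list Atom) p : Fix (S1 ++ S2) p -> Fix S2 p.
Proof. intros H a Ha; apply H, in_or_app; auto. Qed.

Lemma act_trivial (T : pset Atom) (e : perm Atom) (u : T) :
  fsupp u -> (forall a, pf e a = a) -> act T e u = u.
Proof. intros [S HS] He. apply HS. intros a _. apply He. Qed.

Lemma fs_subset_fsupp (T : pset Atom) (Z : T -> Prop) :
  fs_subset Z -> @fsupp Atom (powset T) Z.
Proof.
  intros [S HS]. exists S. intros p Hp. apply seteq_eq, HS, Hp.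
Qed.

End Permutations.

Section InvariantSet.
Variable Atom : Type.
Variables (T : pset Atom) (U : T -> Prop).
Hypothesis HU : invariant_set U.

Lemma U_act p x : U x -> U (act T p x).
Proof. apply (proj1 HU). Qed.

Lemma act_inv_l p u : U u -> act T (perm_inv p) (act T p u) = u.
Proof.
  intro Hu. rewrite <- act_comp. apply act_trivial; [apply (proj2 HU), Hu|].
  intro a; apply pfK.
Qed.

Lemma act_inv_r p u : U u -> act T p (act T (perm_inv p) u) = u.
Proof.
  intro Hu. rewrite <- act_comp. apply act_trivial; [apply (proj2 HU), Hu|].
  intro a; apply pinvK.
Qed.

Lemma act_inj p x y : U x -> U y -> act T p x = act T p y -> x = y.
Proof.
  intros Hx Hy E. rewrite <- (act_inv_l p Hx), <- (act_inv_l p Hy), E.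
  reflexivity.
Qed.

Lemma act_ext p q u :
  U u -> (forall a, pf p a = pf q a) -> act T p u = act T q u.
Proof.
  intros Hu Hpq. rewrite <- (act_inv_r q (U_act p Hu)). f_equal.
  rewrite <- act_comp. apply act_trivial; [apply (proj2 HU), Hu|].
  intro a; simpl. rewrite Hpq. apply pfK.
Qed.

Lemma stable_mem p (Z : T -> Prop) x :
  subset Z U -> seteq (setact p Z) Z -> U x -> (Z (act T p x) <-> Z x).
Proof.
  intros HZ Hs Hx; split; intro H.
  - apply Hs in H. destruct H as [z [Hz E]].
    apply act_inj in E; auto. subst; auto.
  - apply Hs. exists x; auto.
Qed.

Lemma mem_stable p (Z : T -> Prop) :
  subset Z U -> (forall x, U x -> (Z (act T p x) <-> Z x)) ->
  seteq (setact p Z) Z.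
Proof.
  intros HZ H y; split.
  - intros [z [Hz ->]]. apply H; auto.
  - intro Hy. exists (act T (perm_inv p) y). split.
    + apply H; [apply U_act; auto|]. rewrite act_inv_r; auto.
    + rewrite act_inv_r; auto.
Qed.

Lemma setact_inv_l p (Z : T -> Prop) :
  subset Z U -> setact (perm_inv p) (setact p Z) = Z.
Proof.
  intro HZ. apply seteq_eq; intro y; split.
  - intros [w [[z [Hz ->]] ->]]. rewrite act_inv_l; auto.
  - intro Hy. exists (act T p y); split; [exists y; auto|]. rewrite act_inv_l; auto.
Qed.

Lemma setact_inv_r p (Z : T -> Prop) :
  subset Z U -> setact p (setact (perm_inv p) Z) = Z.
Proof.
  intro HZ. apply seteq_eq; intro y; split.
  - intros [w [[z [Hz ->]] ->]]. rewrite act_inv_r; auto.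
  - intro Hy. exists (act T (perm_inv p) y); split; [exists y; auto|].
    rewrite act_inv_r; auto.
Qed.

Lemma fs_setact p (Z : T -> Prop) :
  subset Z U -> fs_subset Z -> fs_subset (setact p Z).
Proof.
  intros HZ [S HS]. exists (map (pf p) S). intros q Hq.
  set (r := pcomp (perm_inv p) (pcomp q p)).
  assert (Hr : Fix S r).
  { intros a Ha. simpl. rewrite (Hq (pf p a)) by (apply in_map; auto). apply pfK. }
  assert (Eqp : setact (pcomp q p) Z = setact (pcomp p r) Z).
  { apply seteq_eq; intro y; split; intros [z [Hz ->]]; exists z; split; auto;
      apply act_ext; auto; intro a; simpl; rewrite pinvK; reflexivity. }
  rewrite <- setact_comp, Eqp, setact_comp, (seteq_eq (HS r Hr)).
  intro; tauto.
Qed.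

Lemma pfs_act (X : T -> Prop) SX p Z :
  subset X U -> (forall p, Fix SX p -> seteq (setact p X) X) -> Fix SX p ->
  pfs X Z -> pfs X (setact p Z).
Proof.
  intros HXU HSX Hp [HZ1 HZ2]. split.
  - apply fs_setact; auto. intros x Hx; auto.
  - intros y [z [Hz ->]]. apply (stable_mem HXU (HSX p Hp)); auto.
Qed.

Lemma pfs_stable (X : T -> Prop) SX p :
  subset X U -> (forall p, Fix SX p -> seteq (setact p X) X) -> Fix SX p ->
  seteq (@setact Atom (powset T) p (pfs X)) (pfs X).
Proof.
  intros HXU HSX Hp W; split.
  - intros [Z [HZ ->]]. apply pfs_act with SX; auto.
  - intro HW. exists (setact (perm_inv p) W). split.
    + apply pfs_act with SX; auto. apply Fix_inv; auto.
    + simpl. rewrite setact_inv_r; auto. intros x Hx. apply HXU, HW; auto.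
Qed.

Lemma ascending_of_sequence (K : Type) (X : T -> Prop) (kappa : T -> K)
    (xs : nat -> T) (Sk : list Atom) :
  subset X U -> fs_subset X -> (forall n, X (xs n)) ->
  (forall i j, kappa (xs i) = kappa (xs j) -> i = j) ->
  (forall p, Fix Sk p -> forall x k, U x ->
     (kappa (act T p x) = kappa (xs k) <-> kappa x = kappa (xs k))) ->
  fsm_ascending_infinite U X.
Proof.
  intros HXU [SX HSX] Hxs Hdist Hinv.
  set (Xs := fun n x => X x /\ forall k, n < k -> kappa x <> kappa (xs k)).
  assert (Hsupp : forall p, Fix (Sk ++ SX) p -> forall n,
             seteq (setact p (Xs n)) (Xs n)).
  { intros p Hp n. apply mem_stable; [intros x [Hx _]; auto|].
    intros x Hx. unfold Xs.
    rewrite (stable_mem HXU (HSX p (Fix_app_r _ _ Hp)) Hx).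
    split; intros [H1 H2]; split; auto; intros k Hk E; apply (H2 k Hk);
      apply (Hinv p (Fix_app_l _ _ Hp) x k Hx); auto. }
  exists Xs. split; [|split; [|split; [|split; [|split]]]].
  - intros n x [Hx _]; auto.
  - intro n. exists (Sk ++ SX). intros p Hp; apply Hsupp; auto.
  - intros n x [Hx H]; split; auto; intros k Hk; apply H; lia.
  - exists (Sk ++ SX); auto.
  - intros x Hx. destruct (classic (exists k, kappa x = kappa (xs k))) as [[k Hk]|N].
    + exists k; split; auto. intros k' Hk' E.
      assert (k = k') by (apply Hdist; congruence). lia.
    + exists 0; split; auto. intros k _ E; apply N; eauto.
  - intros [n Hn]. destruct (Hn (xs (S n)) (Hxs _)) as [_ H].
    apply (H (S n)); auto.
Qed.

End InvariantSet.

Lemma orbit_injective (A : Type) (X Y : A -> Prop) (f : A -> A) (a0 : A) :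
  X a0 -> ~ Y a0 -> subset Y X -> (forall a, X a -> Y (f a)) ->
  (forall a b, X a -> X b -> f a = f b -> a = b) ->
  (forall k, X (Nat.iter k f a0)) /\
  (forall i j, Nat.iter i f a0 = Nat.iter j f a0 -> i = j).
Proof.
  intros H0 HY0 HYX Hf Hinj.
  assert (Hin : forall k, X (Nat.iter k f a0)) by (induction k; simpl; auto).
  split; auto.
  induction i as [|i IH]; intros [|j]; simpl; intro E.
  - reflexivity.
  - exfalso; apply HY0; rewrite E; apply Hf, Hin.
  - exfalso; apply HY0; rewrite <- E; apply Hf, Hin.
  - f_equal; apply IH, Hinj; auto.
Qed.

Section Orbits.
Variable Atom : Type.

Lemma dedekind_orbit (T : pset Atom) (X : T -> Prop) :
  (forall x, X x -> fsupp x) -> fsm_dedekind_infinite X ->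
  exists (xs : nat -> T) (S : list Atom),
    (forall n, X (xs n)) /\ (forall i j, xs i = xs j -> i = j) /\
    (forall p, Fix S p -> forall n, act T p (xs n) = xs n).
Proof.
  intros Hfs [Y [f [_ [HYX [[x0 [Hx0 Hnx0]] [Hmap [Hinj [_ [Sf HSf]]]]]]]]].
  destruct (Hfs x0 Hx0) as [S0 HS0].
  destruct (@orbit_injective _ X Y f x0 Hx0 Hnx0 HYX Hmap Hinj) as [Hin Hdist].
  exists (fun n => Nat.iter n f x0), (Sf ++ S0). split; [|split]; auto.
  intros p Hp. induction n as [|n IH]; simpl.
  - apply HS0. eapply Fix_app_r; eauto.
  - destruct (HSf p (Fix_app_l _ _ Hp)) as [_ [_ Hequiv]].
    rewrite <- Hequiv by apply Hin. rewrite IH. reflexivity.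
Qed.

Lemma dedekind_ascending (T : pset Atom) (U X : T -> Prop) :
  invariant_set U -> subset X U -> fs_subset X ->
  fsm_dedekind_infinite X -> fsm_ascending_infinite U X.
Proof.
  intros HU HXU HX HD.
  destruct (dedekind_orbit (fun x Hx => proj2 HU x (HXU x Hx)) HD)
    as [xs [S [Hxs [Hdist Hfix]]]].
  apply (ascending_of_sequence HU (fun x => x) xs (Sk := S)); auto.
  intros p Hp x k Hx. rewrite <- (Hfix p Hp k) at 1. split; intro E.
  - apply (act_inj HU) in E; auto.
  - subst; auto.
Qed.

Lemma pigeonhole_traces (A : Type) (P : nat -> A -> Prop) (L : list A) :
  forall K : list nat, NoDup K -> 2 ^ length L < length K ->
  exists i j, In i K /\ In j K /\ i <> j /\
              forall l, In l L -> (P i l <-> P j l).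
Proof.
  induction L as [|a L IH]; intros K HK Hlen.
  - destruct K as [|i [|j K]]; simpl in Hlen; try lia.
    inversion HK as [|? ? Hi _]; subst. exists i, j.
    split; [left; auto|split; [right; left; auto|split]].
    + intros ->. apply Hi; left; auto.
    + intros _ [].
  - set (g := fun k => if excluded_middle_informative (P k a) then true else false).
    assert (Hsplit : forall b, 2 ^ length L < length (filter (fun k => Bool.eqb (g k) b) K) ->
              exists i j, In i K /\ In j K /\ i <> j /\
                          forall l, In l (a :: L) -> (P i l <-> P j l)).
    { intros b Hb.
      destruct (IH _ (NoDup_filter _ HK) Hb) as [i [j [Hi [Hj [Hij Htr]]]]].
      apply filter_In in Hi, Hj. destruct Hi as [Hi Gi], Hj as [Hj Gj].
      exists i, j; split; [|split; [|split]]; auto.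
      intros l [<-|Hl]; [|apply Htr; auto].
      apply Bool.eqb_prop in Gi, Gj. unfold g in Gi, Gj.
      destruct (excluded_middle_informative (P i a));
        destruct (excluded_middle_informative (P j a)); subst; try discriminate; tauto. }
    assert (Hcount : length (filter (fun k => Bool.eqb (g k) true) K) +
                     length (filter (fun k => Bool.eqb (g k) false) K) = length K).
    { rewrite <- (filter_length g K).
      f_equal; f_equal; apply filter_ext; intro k; destruct (g k); reflexivity. }
    simpl in Hlen.
    destruct (Nat.lt_ge_cases (2 ^ length L)
                (length (filter (fun k => Bool.eqb (g k) true) K))).
    + apply (Hsplit true); auto.
    + apply (Hsplit false). lia.
Qed.

Definition trace (T : Type) (Zs : nat -> T -> Prop) (x : T) : nat -> Prop :=
  fun i => Zs i x.

Lemma fresh_trace (T : Type) (X : T -> Prop) (Zs : nat -> T -> Prop) :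
  (forall n, subset (Zs n) X) -> (forall i j, Zs i = Zs j -> i = j) ->
  forall L : list T, exists x, X x /\ forall l, In l L -> trace Zs x <> trace Zs l.
Proof.
  intros HZX Hdist L. apply NNPP. intro N.
  assert (Hcov : forall x, X x -> exists l, In l L /\ trace Zs x = trace Zs l).
  { intros x Hx. apply NNPP; intro N2. apply N. exists x. split; auto.
    intros l Hl E. apply N2; eauto. }
  destruct (pigeonhole_traces Zs L (K := seq 0 (S (2 ^ length L))) (seq_NoDup _ _))
    as [i [j [_ [_ [Hij Hl]]]]]; [rewrite length_seq; lia|].
  apply Hij, Hdist, seteq_eq. intro x.
  assert (Hx : forall k, Zs k x -> exists l, In l L /\ forall m, Zs m x = Zs m l).
  { intros k Hk. destruct (Hcov x (HZX k x Hk)) as [l [HlL E]].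
    exists l; split; auto. intro m. exact (equal_f E m). }
  split; intro H.
  - destruct (Hx i H) as [l [HlL E]]. rewrite E in *. apply Hl; auto.
  - destruct (Hx j H) as [l [HlL E]]. rewrite E in *. apply Hl; auto.
Qed.

Lemma fresh_sequence (A K : Type) (X : A -> Prop) (kappa : A -> K) :
  (forall L : list A, exists x, X x /\ forall l, In l L -> kappa x <> kappa l) ->
  exists xs : nat -> A,
    (forall n, X (xs n)) /\ (forall i j, kappa (xs i) = kappa (xs j) -> i = j).
Proof.
  intro Hfresh. destruct (choice _ Hfresh) as [next Hnext].
  set (prefix := fix prefix n :=
         match n with 0 => [] | S n => next (prefix n) :: prefix n end).
  assert (Hprefix : forall i n, i < n -> In (next (prefix i)) (prefix n)).
  { intros i n; induction n as [|n IH]; intro Hi; [lia|]. simpl.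
    destruct (Nat.eq_dec i n); [left; subst; auto|right; apply IH; lia]. }
  exists (fun n => next (prefix n)). split; [intro n; apply Hnext|].
  intros i j E. destruct (Nat.lt_trichotomy i j) as [H|[H|H]]; auto; exfalso.
  - apply (proj2 (Hnext (prefix j)) _ (Hprefix _ _ H)). auto.
  - apply (proj2 (Hnext (prefix i)) _ (Hprefix _ _ H)). auto.
Qed.

Lemma powerset_dedekind_ascending (T : pset Atom) (U X : T -> Prop) :
  invariant_set U -> subset X U -> fs_subset X ->
  fsm_dedekind_infinite (pfs X) -> fsm_ascending_infinite U X.
Proof.
  intros HU HXU HX HD.
  destruct (dedekind_orbit (fun Z HZ => fs_subset_fsupp (proj1 HZ)) HD)
    as [Zs [S [HZs [Hdist Hfix]]]].
  destruct (@fresh_sequence _ _ X (trace Zs) (@fresh_trace _ X Zs (fun n => proj2 (HZs n)) Hdist))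
    as [xs [Hxs Hxdist]].
  apply (ascending_of_sequence HU (trace Zs) xs (Sk := S)); auto.
  intros p Hp x k Hx.
  enough (E : trace Zs (act T p x) = trace Zs x) by (rewrite E; tauto).
  apply functional_extensionality; intro i. apply propositional_extensionality.
  apply (stable_mem HU); auto.
  - intros y Hy. apply HXU, (proj2 (HZs i)), Hy.
  - change (seteq (act (powset T) p (Zs i)) (Zs i)). rewrite Hfix; auto.
    intro; tauto.
Qed.

End Orbits.

Section Chain.
Variable Atom : Type.
Variables (T : pset Atom) (U X : T -> Prop) (C : nat -> T -> Prop) (SC : list Atom).
Hypothesis HU : invariant_set U.
Hypothesis HXU : subset X U.
Hypothesis HXsupp : forall p, Fix SC p -> seteq (setact p X) X.
Hypothesis HC : forall n, pfs X (C n).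
Hypothesis HCsupp : forall p, Fix SC p -> forall n, setact p (C n) = C n.
Hypothesis HCmono : forall n, subset (C n) (C (S n)).
Hypothesis HCunbounded : forall n, exists m, ~ subset (C m) (C n).

Lemma chain_mono i j : i <= j -> subset (C i) (C j).
Proof.
  induction 1 as [|j _ IH]; intros x Hx; auto. apply HCmono, IH, Hx.
Qed.

Definition in_chain (Z : T -> Prop) : Prop := exists n, Z = C n.

Definition least_escape (Z : T -> Prop) (k : nat) : Prop :=
  ~ subset (C k) Z /\ forall j, ~ subset (C j) Z -> k <= j.

Definition successor (Z : T -> Prop) : T -> Prop :=
  if excluded_middle_informative (in_chain Z)
  then C (epsilon (inhabits 0) (least_escape Z)) else Z.

Lemma successor_on_chain n : exists k,
  successor (C n) = C k /\ ~ subset (C k) (C n) /\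
  forall j, ~ subset (C j) (C n) -> subset (C k) (C j).
Proof.
  assert (Hesc : exists k, least_escape (C n) k).
  { destruct (HCunbounded n) as [m Hm].
    destruct (dec_inh_nat_subset_has_unique_least_element
                (fun k => ~ subset (C k) (C n)) (fun k => classic _) (ex_intro _ m Hm))
      as [k [[Hk Hmin] _]].
    exists k; split; auto. }
  unfold successor. destruct (excluded_middle_informative (in_chain (C n)))
    as [_|N]; [|exfalso; apply N; exists n; auto].
  set (k := epsilon _ _). destruct (epsilon_spec (inhabits 0) _ Hesc) as [Hk Hmin].
  exists k. split; [reflexivity|split; auto].
  intros j Hj. apply chain_mono, Hmin, Hj.
Qed.

Lemma successor_off_chain Z : ~ in_chain Z -> successor Z = Z.
Proof.
  intro N. unfold successor.
  destruct (excluded_middle_informative (in_chain Z)); [contradiction|reflexivity].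
Qed.

Lemma successor_grows n : exists k,
  successor (C n) = C k /\ subset (C n) (C k) /\ C k <> C n.
Proof.
  destruct (successor_on_chain n) as [k [E [Hk _]]]. exists k; split; auto.
  split.
  - apply chain_mono. destruct (Nat.le_gt_cases k n) as [H|H]; [|lia].
    exfalso. apply Hk, chain_mono, H.
  - intro Ekn. apply Hk. rewrite Ekn. intros x Hx; exact Hx.
Qed.

Lemma successor_pfs Z : pfs X Z -> pfs X (successor Z).
Proof.
  intro HZ. destruct (classic (in_chain Z)) as [[n ->]|N].
  - destruct (successor_grows n) as [k [-> _]]. apply HC.
  - rewrite successor_off_chain; auto.
Qed.

Lemma successor_injective Z1 Z2 : successor Z1 = successor Z2 -> Z1 = Z2.
Proof.
  assert (Hordered : forall n1 n2, n1 <= n2 ->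
            successor (C n1) = successor (C n2) -> C n1 = C n2).
  { intros n1 n2 Hle E. apply subset_antisym; [apply chain_mono, Hle|].
    apply NNPP; intro Hesc.
    destruct (successor_on_chain n1) as [k1 [E1 [_ Hmin]]].
    destruct (successor_grows n2) as [k2 [E2 [Hsub Hne]]].
    apply Hne, subset_antisym; [|exact Hsub].
    rewrite <- E2, <- E, E1. apply Hmin, Hesc. }
  intro E.
  destruct (classic (in_chain Z1)) as [[n1 ->]|N1];
    destruct (classic (in_chain Z2)) as [[n2 ->]|N2].
  - destruct (Nat.le_ge_cases n1 n2); [|symmetry]; apply Hordered; auto.
  - exfalso. apply N2. rewrite (successor_off_chain N2) in E.
    destruct (successor_grows n1) as [k [Ek _]]. exists k. rewrite <- E; auto.
  - exfalso. apply N1. rewrite (successor_off_chain N1) in E.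
    destruct (successor_grows n2) as [k [Ek _]]. exists k. rewrite E; auto.
  - rewrite !successor_off_chain in E; auto.
Qed.

Lemma successor_not_first Z : successor Z <> C 0.
Proof.
  intro E. destruct (classic (in_chain Z)) as [[n ->]|N].
  - destruct (successor_grows n) as [k [Ek [Hsub Hne]]].
    apply Hne, subset_antisym; auto. rewrite <- Ek, E. apply chain_mono; lia.
  - rewrite (successor_off_chain N) in E. apply N. exists 0; exact E.
Qed.

Lemma successor_equivariant p Z :
  Fix SC p -> pfs X Z -> successor (setact p Z) = setact p (successor Z).
Proof.
  intros Hp HZ. destruct (classic (in_chain Z)) as [[n ->]|N].
  - rewrite HCsupp by exact Hp. destruct (successor_grows n) as [k [-> _]].
    rewrite HCsupp; auto.
  - rewrite !successor_off_chain; auto. intros [n En]. apply N. exists n.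
    rewrite <- (setact_inv_l HU p (Z := Z)) by (intros x Hx; apply HXU, HZ, Hx).
    rewrite En. apply HCsupp, Fix_inv, Hp.
Qed.

Lemma chain_dedekind : fsm_dedekind_infinite (pfs X).
Proof.
  set (Y := fun W : powset T => exists Z, pfs X Z /\ W = successor Z).
  assert (HYsupp : forall p, Fix SC p -> seteq (@setact Atom (powset T) p Y) Y).
  { intros p Hp W; split.
    - intros [W' [[Z [HZ ->]] ->]]. exists (setact p Z). split.
      + apply (pfs_act HU HXU HXsupp Hp HZ).
      + symmetry. apply successor_equivariant; auto.
    - intros [Z [HZ ->]].
      assert (HZ' : pfs X (setact (perm_inv p) Z))
        by exact (pfs_act HU HXU HXsupp (Fix_inv Hp) HZ).
      exists (successor (setact (perm_inv p) Z)). split; [exists (setact (perm_inv p) Z); auto|].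
      simpl. rewrite <- successor_equivariant by auto.
      rewrite (setact_inv_r HU); auto. intros x Hx; apply HXU, HZ, Hx. }
  exists Y, successor. split; [|split; [|split; [|split; [|split; [|split]]]]].
  - exists SC; exact HYsupp.
  - intros W [Z [HZ ->]]. apply successor_pfs, HZ.
  - exists (C 0). split; [apply HC|]. intros [Z [_ E]]. apply (successor_not_first Z); auto.
  - intros Z HZ; exists Z; auto.
  - intros Z1 Z2 _ _. apply successor_injective.
  - intros W [Z [HZ ->]]; eauto.
  - exists SC. intros p Hp. split; [|split].
    + apply (pfs_stable HU HXU HXsupp Hp).
    + apply HYsupp, Hp.
    + intros Z HZ. apply successor_equivariant; auto.
Qed.

End Chain.

Lemma ascending_powerset_dedekind (Atom : Type) (T : pset Atom) (U X : T -> Prop) :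
  invariant_set U -> subset X U -> fs_subset X ->
  fsm_ascending_infinite U X -> fsm_dedekind_infinite (pfs X).
Proof.
  intros HU HXU [SX HSX] [Xs [HXsU [_ [Hmono [[S0 HS0] [Hcov Hnot]]]]]].
  set (C := fun n x => X x /\ Xs n x).
  assert (HCsupp : forall p, Fix (S0 ++ SX) p -> forall n, setact p (C n) = C n).
  { intros p Hp n. apply seteq_eq, (mem_stable HU); [intros x [Hx _]; auto|].
    intros x Hx. unfold C.
    rewrite (stable_mem HU x HXU (HSX p (Fix_app_r _ _ Hp)) Hx).
    rewrite (stable_mem HU x (HXsU n) (HS0 p (Fix_app_l _ _ Hp) n) Hx). tauto. }
  apply (@chain_dedekind Atom T U X C (S0 ++ SX)); auto.
  - intros p Hp. apply HSX, (Fix_app_r _ _ Hp).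
  - intro n. split; [|intros x [Hx _]; exact Hx].
    exists (S0 ++ SX). intros p Hp. rewrite HCsupp by exact Hp. intro; tauto.
  - intros n x [Hx Hxn]. split; auto. apply Hmono, Hxn.
  - intro n. apply NNPP; intro N. apply Hnot. exists n. intros x Hx.
    destruct (Hcov x Hx) as [m Hm]. apply NNPP; intro N2. apply N. exists m.
    intro Hs. apply N2, (Hs x). split; auto.
Qed.

Lemma finite_injection_onto (A : Type) (K : list A) (f : A -> A) :
  (forall x, In x K -> In (f x) K) ->
  (forall x y, In x K -> In y K -> f x = f y -> x = y) ->
  forall y, In y K -> exists x, In x K /\ f x = y.
Proof.
  intros Hmaps Hinj y Hy.
  set (K' := nodup (fun x y : A => excluded_middle_informative (x = y)) K).
  assert (HK' : forall x, In x K' <-> In x K) by (intro; apply nodup_In).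
  assert (Hnd : NoDup (map f K')).
  { apply NoDup_map_NoDup_ForallPairs; [|apply NoDup_nodup].
    intros x z Hx Hz. apply Hinj; apply HK'; auto. }
  assert (Honto : incl K' (map f K')).
  { apply NoDup_length_incl; auto; [rewrite length_map; auto|].
    intros z Hz. apply in_map_iff in Hz. destruct Hz as [x [<- Hx]].
    apply HK', Hmaps, HK', Hx. }
  apply HK', Honto, in_map_iff in Hy. destruct Hy as [x [E Hx]].
  exists x; split; auto. apply HK', Hx.
Qed.

Section Atoms.
Variable Atom : Type.
Hypothesis HA : infinite_atoms Atom.

Notation atoms := (atoms_pset Atom).

Definition swap_fun (a b x : Atom) : Atom :=
  if excluded_middle_informative (x = a) then b
  else if excluded_middle_informative (x = b) then a else x.

Lemma swap_funK a b x : swap_fun a b (swap_fun a b x) = x.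
Proof.
  unfold swap_fun.
  destruct (excluded_middle_informative (x = a));
    destruct (excluded_middle_informative (x = b));
  repeat (match goal with |- context [excluded_middle_informative ?P] =>
            destruct (excluded_middle_informative P) end); subst; congruence.
Qed.

Lemma swap_fun_l a b : swap_fun a b a = b.
Proof. unfold swap_fun. destruct (excluded_middle_informative (a = a)); congruence. Qed.

Lemma swap_fun_other a b x : x <> a -> x <> b -> swap_fun a b x = x.
Proof.
  intros. unfold swap_fun.
  destruct (excluded_middle_informative (x = a)); [congruence|].
  destruct (excluded_middle_informative (x = b)); congruence.
Qed.

Definition swap (a b : Atom) : perm Atom.
Proof.
  refine (@Perm Atom (swap_fun a b) (swap_fun a b) (swap_funK a b) (swap_funK a b)
            [a; b] _).
  intros x Hx. apply swap_fun_other; intros ->; apply Hx; simpl; auto.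
Defined.

Definition fin_le (n : nat) (Z : atoms -> Prop) : Prop :=
  exists l, length l <= n /\ forall a, Z a <-> In a l.

Lemma setact_list p (l : list Atom) :
  @setact Atom atoms p (fun a => In a l) = (fun a => In a (map (pf p) l)).
Proof.
  apply seteq_eq. intro a. simpl. rewrite in_map_iff. split.
  - intros [z [Hz ->]]. exists z; auto.
  - intros [z [<- Hz]]. exists z; auto.
Qed.

Lemma fin_le_stable p n :
  seteq (@setact Atom (powset atoms) p (fin_le n)) (fin_le n).
Proof.
  intro W; split.
  - intros [Z [[l [Hl HZ]] ->]]. exists (map (pf p) l). split; [rewrite length_map; auto|].
    intro a. simpl. rewrite (seteq_eq (B := fun a => In a l) HZ), setact_list. tauto.
  - intros [l [Hl HW]]. exists (fun a => In a (map (pinv p) l)). split.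
    + exists (map (pinv p) l). split; [rewrite length_map; auto|]. intro; tauto.
    + simpl. rewrite setact_list, map_map, (seteq_eq HW).
      rewrite (map_ext _ (fun a => a)) by apply pinvK. rewrite map_id. reflexivity.
Qed.

Lemma pfin_fs_subset Z : pfin Z -> fs_subset (T := atoms) Z.
Proof.
  intros [l Hl]. exists l. intros p Hp y. unfold setact; simpl. split.
  - intros [z [Hz ->]]. rewrite Hp; [exact Hz|apply Hl, Hz].
  - intro Hy. exists y. split; auto. rewrite Hp; [reflexivity|apply Hl, Hy].
Qed.

Lemma nodup_list_of_length n : exists l : list Atom, NoDup l /\ length l = n.
Proof.
  induction n as [|n [l [Hl Hlen]]]; [exists []; split; auto; constructor|].
  destruct (HA l) as [a Ha]. exists (a :: l); split; simpl; auto. constructor; auto.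
Qed.

Lemma pfin_ascending :
  fsm_ascending_infinite (pfs (fun _ : atoms => True)) (@pfin Atom).
Proof.
  exists fin_le. split; [|split; [|split; [|split; [|split]]]].
  - intros n Z [l [_ HZ]]. split; [|intros x _; exact I].
    apply pfin_fs_subset. exists l; exact HZ.
  - intro n. exists []. intros p _. apply fin_le_stable.
  - intros n Z [l [Hl HZ]]. exists l; split; auto.
  - exists []. intros p _ n. apply fin_le_stable.
  - intros Z [l Hl]. exists (length l), l; split; auto.
  - intros [n Hn]. destruct (nodup_list_of_length (S n)) as [l [Hl Hlen]].
    destruct (Hn (fun a => In a l)) as [l' [Hl' HZ]]; [exists l; intro; tauto|].
    assert (length l <= length l')
      by (apply NoDup_incl_length; auto; intros a Ha; apply HZ, Ha).
    lia.
Qed.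

(* A finitely supported map f on wp_fin(A) satisfies f(Z) ⊆ Sf ∪ Z: an atom
   a of f(Z) outside Sf ∪ Z could be swapped with a fresh atom b, giving
   b ∈ f(Z) for infinitely many b. *)
Lemma fs_map_pfin_bound (f : (atoms -> Prop) -> atoms -> Prop) (Sf : list Atom) :
  (forall Z, pfin Z -> pfin (f Z)) ->
  (forall p, Fix Sf p -> forall Z, pfin Z ->
     f (@setact Atom atoms p Z) = @setact Atom atoms p (f Z)) ->
  forall Z, pfin Z -> forall a, f Z a -> In a Sf \/ Z a.
Proof.
  intros Hfin Hequiv Z HZ a Ha. apply NNPP; intro N.
  destruct HZ as [lZ HlZ]. destruct (Hfin Z (ex_intro _ lZ HlZ)) as [lW HlW].
  destruct (HA (a :: Sf ++ lZ ++ lW)) as [b Hb].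
  assert (Hfresh : b <> a /\ ~ In b Sf /\ ~ In b lZ /\ ~ In b lW).
  { repeat split; intro H; apply Hb; simpl; rewrite !in_app_iff; auto. }
  destruct Hfresh as [Hba [HbS [HbZ HbW]]].
  assert (Hp : Fix Sf (swap a b)).
  { intros c Hc. apply swap_fun_other; intros ->; auto. }
  assert (HpZ : @setact Atom atoms (swap a b) Z = Z).
  { rewrite (seteq_eq (B := fun c => In c lZ) HlZ), setact_list.
    enough (E : map (pf (swap a b)) lZ = lZ) by (rewrite E; reflexivity).
    transitivity (map (fun c => c) lZ); [|apply map_id].
    apply map_ext_in. intros c Hc. apply swap_fun_other; intros ->; auto.
    apply N; right; apply HlZ, Hc. }
  specialize (Hequiv _ Hp Z (ex_intro _ lZ HlZ)). rewrite HpZ in Hequiv.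
  apply HbW, HlW. rewrite Hequiv. exists a. split; auto. symmetry; apply swap_fun_l.
Qed.

Fixpoint subsets (l : list Atom) : list (atoms -> Prop) :=
  match l with
  | [] => [fun _ => False]
  | a :: l => subsets l ++ map (fun Z x => x = a \/ Z x) (subsets l)
  end.

Lemma subsets_complete l (Z : atoms -> Prop) :
  (forall x, Z x -> In x l) -> In Z (subsets l).
Proof.
  revert Z. induction l as [|a l IH]; intros Z HZ; simpl.
  - left. apply seteq_eq. intro x; split; [tauto|]. intro H; apply (HZ x H).
  - set (Z' := fun x => Z x /\ x <> a).
    assert (HZ' : In Z' (subsets l)).
    { apply IH. intros x [Hx Hne]. destruct (HZ x Hx); auto. congruence. }
    apply in_or_app. destruct (classic (Z a)) as [Ha|Ha].
    + right. apply in_map_iff. exists Z'; split; auto. apply seteq_eq. intro x.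
      unfold Z'. split; [intros [->|[Hx _]]; auto|].
      intro Hx. destruct (classic (x = a)); auto.
    + left. replace Z with Z'; auto. apply seteq_eq. intro x. unfold Z'.
      split; [intros [Hx _]; auto|]. intro Hx; split; auto. intros ->; auto.
Qed.

Lemma subsets_sound l (Z : atoms -> Prop) :
  In Z (subsets l) -> pfin Z /\ (forall x, Z x -> In x l).
Proof.
  revert Z. induction l as [|a l IH]; intros Z HZ; simpl in HZ.
  - destruct HZ as [<-|[]]. split; [exists []; intro; simpl; tauto|tauto].
  - apply in_app_or in HZ. destruct HZ as [HZ|HZ].
    + destruct (IH Z HZ) as [H1 H2]. split; auto. intros x Hx; right; auto.
    + apply in_map_iff in HZ. destruct HZ as [Z' [<- HZ']].
      destruct (IH Z' HZ') as [[l' Hl'] H2]. split.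
      * exists (a :: l'). intro x. simpl. rewrite Hl'. split; intros [H|H]; auto.
      * intros x [->|Hx]; [left; auto|right; auto].
Qed.

(* A Dedekind map
   with support Sf maps the finitely many subsets of Sf ∪ Z0 injectively into
   themselves, hence onto, so it hits the set Z0 outside its range. *)
Lemma pfin_not_dedekind : ~ fsm_dedekind_infinite (@pfin Atom).
Proof.
  intros [Y [f [_ [HYfin [[Z0 [[l0 Hl0] HnZ0]] [Hmap [Hinj [_ [Sf HSf]]]]]]]]].
  assert (Hbound : forall Z, pfin Z -> forall a, f Z a -> In a Sf \/ Z a).
  { apply fs_map_pfin_bound; [intros Z HZ; apply HYfin, Hmap, HZ|].
    intros p Hp Z HZ. apply (HSf p Hp), HZ. }
  set (K := subsets (Sf ++ l0)).
  assert (HK : forall Z, In Z K -> pfin Z) by (intros Z HZ; apply (subsets_sound _ _ HZ)).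
  assert (Honto : forall W, In W K -> exists Z, In Z K /\ f Z = W).
  { apply finite_injection_onto.
    - intros Z HZ. apply subsets_complete. intros x Hx.
      destruct (Hbound Z (HK Z HZ) x Hx) as [H|H]; apply in_or_app; [left; auto|].
      destruct (subsets_sound _ _ HZ) as [_ HZl]. apply in_app_or, HZl, H.
    - intros Z1 Z2 H1 H2. apply Hinj; apply HK; auto. }
  destruct (Honto Z0) as [Z [HZ E]].
  - apply subsets_complete. intros x Hx. apply in_or_app; right; apply Hl0, Hx.
  - apply HnZ0. rewrite <- E. apply Hmap, HK, HZ.
Qed.

End Atoms.

Theorem mainTheorem10 (Atom : Type) (HA : infinite_atoms Atom) :
  (* (8) *)
  (forall (T : pset Atom) (U X : T -> Prop),
      invariant_set U -> subset X U -> fs_subset X ->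
      (fsm_dedekind_infinite (pfs X) <-> fsm_ascending_infinite U X)) /\
  (* (9), first part *)
  (forall (T : pset Atom) (U X : T -> Prop),
      invariant_set U -> subset X U -> fs_subset X ->
      fsm_dedekind_infinite X -> fsm_ascending_infinite U X) /\
  (* (9), counterexample to the converse: wp_fin(A) inside wp_fs(A) *)
  (fsm_ascending_infinite (pfs (fun _ : atoms_pset Atom => True)) (@pfin Atom) /\
   ~ fsm_dedekind_infinite (@pfin Atom)).
Proof.
  split; [|split; [|split]].
  - intros T U X HU HXU HX. split.
    + apply powerset_dedekind_ascending; auto.
    + apply ascending_powerset_dedekind; auto.
  - apply dedekind_ascending.
  - apply pfin_ascending, HA.
  - apply pfin_not_dedekind, HA.
Qed.
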